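(* Let $\mathcal{B}$ be a base, $P=\{p_1,\dots,p_n\}$ and $S$ atomic multisets, and $q$ an atom. The following are equivalent: (1) $P,S\vdash_{\mathcal{B}}q$; (2) for every base $\mathcal{C}\supseteq\mathcal{B}$ and all atomic multisets $T_1,\dots,T_n$ with $T_i\vdash_{\mathcal{C}}p_i$ for each $i=1,\dots,n$, we have $T_1,\dots,T_n,S\vdash_{\mathcal{C}}q$.
   Context: Fix a set $\mathbb{A}$ of atoms; atomic multisets are finite multisets of atoms, ''$P,Q$'' denotes multiset union. An atomic sequent is $P\Rightarrow p$ with $P$ an atomic multiset, $p$ an atom. An atomic box is a multiset of atomic sequents. An atomic rule is a triple $\langle\mathbf{A},\mathbf{S},p\rangle$ with $\mathbf{A}$ a multiset of atomic boxes, $\mathbf{S}$ an atomic box, $p$ an atom. A base is a set of atomic rules. An atom $p$ is persistent in $\mathcal{B}$ if some $\langle\varnothing,\mathbf{S},p\rangle\in\mathcal{B}$ has $\mathbf{S}\neq\varnothing$. Derivability $\vdash_{\mathcal{B}}$ is defined inductively: (Ref) $p\vdash_{\mathcal{B}}p$; (App) if $\langle\mathbf{A},\mathbf{S},p\rangle\in\mathcal{B}$ with $\mathbf{A}=\{\mathbf{T}_1,\dots,\mathbf{T}_m\}$, and there are atomic multisets $C_1,\dots,C_n$ ($n\ge m$) and a multiset $D=\{d_{m+1},\dots,d_n\}$ of atoms persistent in $\mathcal{B}$ such that $C_i,Q\vdash_{\mathcal{B}}q$ for every $i\le m$ and every $Q\Rightarrow q\in\mathbf{T}_i$, $C_j\vdash_{\mathcal{B}}d_j$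 for every $m<j\le n$, and $D,U\vdash_{\mathcal{B}}v$ for every $U\Rightarrow v\in\mathbf{S}$, then $C_1,\dots,C_n\vdash_{\mathcal{B}}p$. *)

From mathcomp Require Import all_boot.
From mathcomp Require Import finmap multiset.

Set Implicit Arguments.
Unset Strict Implicit.
Unset Printing Implicit Defensive.

Local Open Scope mset_scope.

Definition sequent (Atom : choiceType) := ({mset Atom} * Atom)%type.
Definition box (Atom : choiceType) := {mset (sequent Atom)}.
Definition rule (Atom : choiceType) := ({mset (box Atom)} * box Atom * Atom)%type.
Definition base (Atom : choiceType) := rule Atom -> Prop.

Definition subbase (Atom : choiceType) (B C : base Atom) : Prop :=
  forall r, B r -> C r.

Definition msum (Atom : choiceType) (Cs : seq {mset Atom}) : {mset Atom} :=
  foldr (fun X Y => X `+` Y) mset0 Cs.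

Definition persistent (Atom : choiceType) (B : base Atom) (p : Atom) : Prop :=
  exists S : box Atom, B (mset0, S, p) /\ S != mset0.

(* Derivability  P |-_B p.
   In (App): the multiset of boxes A = {T_1,..,T_m} is enumerated by the list
   Ts; Cs = [C_1;..;C_m]; Ex = [(C_{m+1},d_{m+1});..;(C_n,d_n)];
   D = {d_{m+1},..,d_n}. *)
Inductive derives (Atom : choiceType) (B : base Atom) : {mset Atom} -> Atom -> Prop :=
| d_ref (p : Atom) : derives B [mset p] p
| d_app (As : {mset (box Atom)}) (S : box Atom) (p : Atom)
        (Ts : seq (box Atom)) (Cs : seq {mset Atom})
        (Ex : seq ({mset Atom} * Atom)) :
    B (As, S, p) ->
    seq_mset Ts = As ->
    size Cs = size Ts ->
    (forall i, i < size Ts ->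
       forall (Q : {mset Atom}) (q : Atom), (Q, q) \in nth mset0 Ts i ->
         derives B (nth mset0 Cs i `+` Q) q) ->
    (forall e, e \in Ex -> persistent B e.2 /\ derives B e.1 e.2) ->
    (forall (U : {mset Atom}) (v : Atom), (U, v) \in S ->
         derives B (seq_mset (map snd Ex) `+` U) v) ->
    derives B (msum Cs `+` msum (map fst Ex)) p.

(* The substance is cut:
   if [G |-_C q] with [a] in [G] and [T |-_C a], then [T, G - a |-_C q].
   By induction on the derivation of [q], the occurrence of [a] lies either in
   the context [C_i] of a box premise, where the induction hypothesis for the
   premises [C_i, Q |- q'] does the job, or in the context [C_j] of a
   persistent atom [d_j], where it is the induction hypothesis for
   [C_j |- d_j]; in both cases [T] takes the place of [a] in that context.
   Cutting the [p_i] away one at a time gives (1) => (2); conversely take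
   [C = B] and [T_i = {p_i}], which derives [p_i] by (Ref). *)

From mathcomp Require Import all_boot finmap multiset.

Set Implicit Arguments.
Unset Strict Implicit.
Unset Printing Implicit Defensive.

Local Open Scope mset_scope.

Lemma map_set_nth (T U : Type) (f : T -> U) x0 s n y :
  map f (set_nth x0 s n y) = set_nth (f x0) (map f s) n (f y).
Proof. by elim: s n => [|x s IHs] [|n] //=; [elim: n => //= n -> | rewrite IHs]. Qed.

Lemma set_nth_nth (T : Type) (x0 : T) s n : n < size s ->
  set_nth x0 s n (nth x0 s n) = s.
Proof. by elim: s n => [|x s IHs] [|n] //= ltns; rewrite IHs. Qed.

Lemma mem_set_nth (T : eqType) (x0 : T) s n y x : n < size s ->
  x \in set_nth x0 s n y -> x = y \/ x \in s.
Proof.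
move=> ltns; rewrite set_nthE ltns mem_cat inE.
by case/or3P => [/mem_take | /eqP | /mem_drop]; auto.
Qed.

Section Multisets.
Variable K : choiceType.
Implicit Types (A B R T : {mset K}) (Xs : seq {mset K}).

Lemma seq_mset_nil : seq_mset [::] = mset0 :> {mset K}.
Proof. by apply/msetP => a; rewrite mset_seqE mset0E. Qed.

Lemma seq_mset_msum (s : seq K) : seq_mset s = msum [seq [mset a] | a <- s].
Proof. by elim: s => [|a s IHs] /=; rewrite ?seq_mset_nil // mset_cons IHs. Qed.

Lemma msetDB1l A B a : a \in A -> (A `+` B) `\ a = A `\ a `+` B.
Proof. by move=> Aa; rewrite msetDC -msetDBA ?msub1set // msetDC. Qed.

Lemma in_msum a Xs :
  a \in msum Xs -> exists2 i, i < size Xs & a \in nth mset0 Xs i.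
Proof.
elim: Xs => [|X Xs IHXs] /=; first by rewrite in_mset0.
case/msetDP => [Xa | /IHXs [i ltis Xia]]; first by exists 0.
by exists i.+1.
Qed.

Lemma msum_set_nth_subst Xs R i a T : i < size Xs -> a \in nth mset0 Xs i ->
  msum (set_nth mset0 Xs i (T `+` (nth mset0 Xs i `\ a))) `+` R
  = T `+` ((msum Xs `+` R) `\ a).
Proof.
elim: Xs R i => [|X Xs IHXs] R [|i] //= ltis Xia.
  by rewrite -!msetDA -msetDB1l ?msetDA // in_msetD Xia.
by rewrite [X `+` _]msetDC -msetDA IHXs // msetDCA msetDA.
Qed.

End Multisets.

Section DerivesInd.
Variables (Atom : choiceType) (B : base Atom) (P : {mset Atom} -> Atom -> Prop).

Hypothesis P_ref : forall p, P [mset p] p.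

Hypothesis P_app : forall (As : {mset box Atom}) (S : box Atom) (p : Atom)
    (Ts : seq (box Atom)) (Cs : seq {mset Atom}) (Ex : seq ({mset Atom} * Atom)),
  B (As, S, p) -> seq_mset Ts = As -> size Cs = size Ts ->
  (forall i, i < size Ts -> forall Q q, (Q, q) \in nth mset0 Ts i ->
     derives B (nth mset0 Cs i `+` Q) q /\ P (nth mset0 Cs i `+` Q) q) ->
  (forall e, e \in Ex -> [/\ persistent B e.2, derives B e.1 e.2 & P e.1 e.2]) ->
  (forall U v, (U, v) \in S -> let D := seq_mset (map snd Ex) in
     derives B (D `+` U) v /\ P (D `+` U) v) ->
  P (msum Cs `+` msum (map fst Ex)) p.

(* Unlike [derives_ind], this also provides induction hypotheses for the
   derivations of the persistent atoms, which occur under a conjunction. *)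
Fixpoint derives_ind_full G q (d : derives B G q) : P G q :=
  match d with
  | d_ref p => P_ref p
  | d_app As Sb p Ts Cs Ex BASp TsAs sizeCs dTs dEx dS =>
    P_app BASp TsAs sizeCs
      (fun i ltiTs Q q' TsiQq' => let dQ := dTs i ltiTs Q q' TsiQq' in
         conj dQ (derives_ind_full dQ))
      (fun e Ex_e => let: conj persist de := dEx e Ex_e in
         And3 persist de (derives_ind_full de))
      (fun U v SUv => let dU := dS U v SUv in conj dU (derives_ind_full dU))
  end.

End DerivesInd.

Section Derivations.
Variable Atom : choiceType.
Implicit Types (B C : base Atom) (G T : {mset Atom}) (p q : Atom).

Lemma persistent_mono B C p : subbase B C -> persistent B p -> persistent C p.
Proof. by move=> BC [S [BS S0]]; exists S; split; first exact: BC. Qed.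

Lemma derives_mono B C G q : subbase B C -> derives B G q -> derives C G q.
Proof.
move=> BC; elim/derives_ind_full => {G q} [p | As S p Ts Cs Ex].
  exact: d_ref.
move=> BASp TsAs sizeCs dTs dEx dS.
apply: d_app (BC _ BASp) TsAs sizeCs _ _ _.
- by move=> i ltiTs Q q Qq; case: (dTs i ltiTs Q q Qq).
- by move=> e /dEx [persist _ de]; split; first exact: persistent_mono persist.
- by move=> U v /dS [].
Qed.

Lemma derives_cut C G q : derives C G q ->
  forall a T, a \in G -> derives C T a -> derives C (T `+` (G `\ a)) q.
Proof.
elim/derives_ind_full => {G q} [p | As S p Ts Cs Ex CASp TsAs sizeCs dTs dEx dS]
  a T.
  by move=> /mset1P -> dT; rewrite msetBxx msetD0.
case/msetDP => [/in_msum [i ltiCs Cia] dT | /in_msum [j]].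
  rewrite -(msum_set_nth_subst _ _ ltiCs Cia).
  apply: d_app CASp TsAs _ _ _ _.
  - by rewrite size_set_nth (maxn_idPr ltiCs).
  - move=> k ltkTs Q q TkQq; rewrite nth_set_nth /=.
    have [eki | _] := eqVneq k i; last by case: (dTs k ltkTs Q q TkQq).
    subst k; have [_ IH] := dTs i ltkTs Q q TkQq.
    by rewrite -msetDA -msetDB1l //; apply: IH dT; rewrite in_msetD Cia.
  - by move=> e /dEx [].
  - by move=> U v /dS [].
rewrite size_map => ltjEx Exja dT.
set ej := nth (mset0, a) Ex j.
set Ex' := set_nth (mset0, a) Ex j (T `+` (ej.1 `\ a), ej.2).
have fstEx' : map fst Ex' =
    set_nth mset0 (map fst Ex) j (T `+` (nth mset0 (map fst Ex) j `\ a)).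
  by rewrite map_set_nth (nth_map (mset0, a)).
have sndEx' : map snd Ex' = map snd Ex.
  by rewrite map_set_nth /= -(nth_map (mset0, a) a) // set_nth_nth // size_map.
rewrite [msum Cs `+` _]msetDC -(msum_set_nth_subst _ _ _ Exja) ?size_map //.
rewrite -fstEx' msetDC.
apply: d_app CASp TsAs sizeCs _ _ _.
- by move=> k ltkTs Q q TkQq; case: (dTs k ltkTs Q q TkQq).
- move=> e /(mem_set_nth ltjEx) [-> /= | /dEx [] //].
  have [persist _ IH] := dEx ej (mem_nth _ ltjEx); split=> //.
  by apply: IH dT; rewrite -(nth_map _ mset0).
- by rewrite sndEx' => U v /dS [].
Qed.

Lemma derives_cut1 C G T a q :
  derives C (a +` G) q -> derives C T a -> derives C (T `+` G) q.
Proof. by move=> dG /(derives_cut dG (mset1D1 a G)); rewrite msetD1K. Qed.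

Lemma derives_cut_seq C (ps : seq Atom) Ts G q x0 :
  derives C (seq_mset ps `+` G) q -> size Ts = size ps ->
  (forall i, i < size ps -> derives C (nth mset0 Ts i) (nth x0 ps i)) ->
  derives C (msum Ts `+` G) q.
Proof.
elim: ps Ts G => [|a ps IHps] [|T Ts] G //=; first by rewrite seq_mset_nil.
rewrite mset_cons -msetDA => dG [sizeTs] dTs.
have /IHps : derives C (seq_mset ps `+` (T `+` G)) q.
  by rewrite msetDCA; apply: derives_cut1 dG (dTs 0 _).
by move=> /(_ Ts sizeTs); rewrite -msetDA msetDCA; apply=> i; apply: (dTs i.+1).
Qed.

End Derivations.

Theorem lemma1 (Atom : choiceType) (B : base Atom) (ps : seq Atom)
    (S : {mset Atom}) (q : Atom) :
  derives B (seq_mset ps `+` S) q <->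
  (forall C : base Atom, subbase B C ->
   forall Ts : seq {mset Atom}, size Ts = size ps ->
     (forall i, i < size ps -> derives C (nth mset0 Ts i) (nth q ps i)) ->
     derives C (msum Ts `+` S) q).
Proof.
split=> [dB C BC Ts sizeTs dTs | derivesC].
  exact: derives_cut_seq (derives_mono BC dB) sizeTs dTs.
rewrite seq_mset_msum; apply: derivesC => [// | | i ltips]; first by rewrite size_map.
by rewrite (nth_map q) //; apply: d_ref.
Qed.
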